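(* Let $d\ge2$ and $p\ge1$ be integers and let $\mathbb{P}_k^{(d)}$ be the uniform probability measure on $\mathcal{C}_k^{(d)}$. Then with $\kappa_{p,d}:=(2pd^pe^p)^{-1}$, $$\mathbb{P}_k^{(d)}(T\text{ is not }p\text{-perfect})\le e^{-\kappa_{p,d}(k-p)_+}\qquad\text{for all }k\in\mathbb{N},$$ where $x_+=\max(x,0)$.
   Context: A $d$-Catalan tree is a rooted planar tree in which every vertex has $0$ or $d$ children; $\mathcal{C}_k^{(d)}$ is the set of such trees with $k$ internal (non-leaf) vertices. A tree $T$ is $p$-perfect if it contains a path $(v_0,\dots,v_p)$, with $v_i$ a child of $v_{i-1}$ for each $i$, such that each of the $(d-1)p$ siblings of $v_1,\dots,v_p$ is a leaf. *)

From Stdlib Require Import Reals List Arith Bool.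
Import ListNotations.
Open Scope bool_scope.

(* Rooted planar (ordered) trees: a vertex is the ordered list of its
   children; a leaf is [Node nil]. *)
Inductive tree : Type := Node : list tree -> tree.

Definition leaf : tree := Node nil.

Definition is_leaf (t : tree) : bool :=
  match t with Node nil => true | _ => false end.

Fixpoint is_dtree (d : nat) (t : tree) : bool :=
  match t with
  | Node cs =>
      (match cs with nil => true | _ => Nat.eqb (length cs) d end)
      && forallb (is_dtree d) cs
  end.

Fixpoint internal (t : tree) : nat :=
  match t with
  | Node nil => 0
  | Node cs => S (list_sum (map internal cs))
  end.

(* [perfect_from p v]: there is a downward path (v = v_0, v_1, ..., v_p)
   starting at v, v_i a child of v_{i-1}, such that every sibling of each
   v_i (i >= 1) is a leaf. Siblings are distinguished by their position. *)
Fixpoint perfect_from (p : nat) (t : tree) {struct p} : bool :=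
  match p with
  | 0 => true
  | S p' =>
      match t with
      | Node cs =>
          existsb (fun i =>
            forallb (fun j => Nat.eqb j i || is_leaf (nth j cs leaf))
                    (seq 0 (length cs))
            && perfect_from p' (nth i cs leaf))
          (seq 0 (length cs))
      end
  end.

Fixpoint is_perfect (p : nat) (t : tree) {struct t} : bool :=
  match t with
  | Node cs => perfect_from p t || existsb (is_perfect p) cs
  end.

Definition kappa (p d : nat) : R :=
  / (2 * INR p * INR d ^ p * exp 1 ^ p).

(* Let a(s,m) be the number of forests of s d-trees with m internal vertices, t_j the
   number of d-trees with j internal vertices that are not p-perfect, and rho = e^(-kappa).
   The children of a root that is not p-perfect are not p-perfect either, so t_(m+1) is at
   most the d-fold convolution of (t_j) at m; and the d^(p-1) "spines" (p internal vertices
   on a path, all other children leaves) are p-perfect, so t_p <= a(1,p) - d^(p-1).  Strong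
   induction then gives t_j <= a(1,j) rho^(j-p) - [j = p] d^(p-1): convolution powers of the
   tilted sequence a(1,j) rho^j are again explicit, and the deficit d^(p-1), carried through
   the convolution, pays for the factor rho^(p(d-1)+1) lost in each step, because the closed
   formula for a(s,m) gives a(d,m) <= (d/(d-1))^2 (d (d/(d-1))^(d-1))^p a(d-1,m-p) and
   (1 + 1/(d-1))^(d-1) <= e.  For p = 1 there is nothing to prove: a lowest internal vertex
   witnesses 1-perfectness. *)

From Stdlib Require Import Reals List Arith Lia Lra Bool FinFun Permutation.
Import ListNotations.

Fixpoint tree_nested_ind (P : tree -> Prop)
  (IH : forall cs, Forall P cs -> P (Node cs)) (t : tree) : P t :=
  match t with
  | Node cs => IH cs ((fix all (l : list tree) : Forall P l :=
                 match l with
                 | [] => Forall_nil P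
                 | c :: l' => Forall_cons c (tree_nested_ind P IH c) (all l')
                 end) cs)
  end.

Lemma internal_Node cs : cs <> [] -> internal (Node cs) = S (list_sum (map internal cs)).
Proof. now destruct cs. Qed.

Lemma is_dtree_Node d cs :
  is_dtree d (Node cs) = true <->
  cs = [] \/ (length cs = d /\ Forall (fun t => is_dtree d t = true) cs).
Proof.
  destruct cs as [|c cs]; [simpl; tauto|].
  cbn [is_dtree]. fold (is_dtree d).
  rewrite andb_true_iff, Nat.eqb_eq, forallb_forall, Forall_forall.
  split; [tauto|]. intros [H|H]; [discriminate|exact H].
Qed.

Definition dforest (d s m : nat) (f : list tree) : Prop :=
  length f = s /\ Forall (fun t => is_dtree d t = true) f /\
  list_sum (map internal f) = m.

Definition graft (d : nat) (f : list tree) : list tree :=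
  Node (firstn d f) :: skipn d f.

Lemma graft_inj d : Injective (graft d).
Proof.
  intros f g E. injection E as E1 E2.
  now rewrite <- (firstn_skipn d f), <- (firstn_skipn d g), E1, E2.
Qed.

Lemma dforest_0 d m f : dforest d 0 m f <-> f = [] /\ m = 0.
Proof.
  split.
  - intros [Hl [_ Hm]]. destruct f; [|discriminate]. now split.
  - intros [-> ->]. now repeat split.
Qed.

Lemma dforest_S d s m f : 1 <= d ->
  dforest d (S s) m f <->
  (exists g, f = leaf :: g /\ dforest d s m g) \/
  (exists m' g, m = S m' /\ f = graft d g /\ dforest d (s + d) m' g).
Proof.
  intros Hd. split.
  - intros [Hl [HF Hm]]. destruct f as [|[cs] g]; [discriminate|].
    apply Forall_cons_iff in HF as [Ht HF]. simpl in Hl.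
    change (internal (Node cs) + list_sum (map internal g) = m) in Hm.
    apply is_dtree_Node in Ht as [->|[Hcs Hcs']].
    + left. exists g. repeat split; auto.
    + assert (cs <> []) by (intros ->; simpl in Hcs; lia).
      rewrite internal_Node in Hm by assumption.
      right. exists (list_sum (map internal (cs ++ g))), (cs ++ g). repeat split.
      * rewrite map_app, list_sum_app. lia.
      * unfold graft. rewrite <- Hcs, firstn_app, skipn_app, Nat.sub_diag, skipn_all.
        now rewrite firstn_all, app_nil_r.
      * rewrite length_app. lia.
      * now apply Forall_app.
  - intros [[g [-> [Hl [HF Hm]]]]|[m' [g [-> [-> [Hl [HF Hm]]]]]]].
    + repeat split; simpl; auto.
    + rewrite <- (firstn_skipn d g) in HF, Hm.
      assert (Hfirst : length (firstn d g) = d) by (rewrite length_firstn; lia).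
      apply Forall_app in HF as [HF1 HF2].
      rewrite map_app, list_sum_app in Hm.
      repeat split.
      * simpl. rewrite length_skipn. lia.
      * constructor; [|assumption]. apply is_dtree_Node. now right.
      * change (internal (Node (firstn d g)) + list_sum (map internal (skipn d g)) = S m').
        rewrite internal_Node by (intros E; rewrite E in Hfirst; simpl in Hfirst; lia).
        lia.
Qed.

(* The first tree of a forest is either a leaf or a root whose [d] subtrees, put in front
   of the remaining trees, form a forest with one internal vertex less. *)
Fixpoint forests (d s m : nat) {struct m} : list (list tree) :=
  let fix go s :=
    match s with
    | 0 => match m with 0 => [[]] | S _ => [] end
    | S s' => map (cons leaf) (go s') ++
              match m with 0 => [] | S m' => map (graft d) (forests d (s' + d) m') end
    end in go s.

Lemma forests_0 d m : forests d 0 m = match m with 0 => [[]] | S _ => [] end.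
Proof. now destruct m. Qed.

Lemma forests_S_0 d s : forests d (S s) 0 = map (cons leaf) (forests d s 0).
Proof. apply app_nil_r. Qed.

Lemma forests_S_S d s m : forests d (S s) (S m) =
  map (cons leaf) (forests d s (S m)) ++ map (graft d) (forests d (s + d) m).
Proof. reflexivity. Qed.

Lemma in_forests d s m f : 1 <= d -> In f (forests d s m) <-> dforest d s m f.
Proof.
  intros Hd. revert s f. induction m as [|m IHm]; induction s as [|s IHs]; intros f;
    rewrite ?forests_0, ?dforest_0, ?forests_S_0, ?forests_S_S, ?dforest_S, ?in_app_iff,
      ?in_map_iff by assumption.
  - simpl. intuition congruence.
  - split.
    + intros [g [<- Hg]]. left. exists g. split; [reflexivity|]. now apply IHs.
    + intros [[g [-> Hg]]|[m' [g [E _]]]]; [|discriminate].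
      exists g. split; [reflexivity|]. now apply IHs.
  - simpl. intuition discriminate.
  - split.
    + intros [[g [<- Hg]]|[g [<- Hg]]].
      * left. exists g. split; [reflexivity|]. now apply IHs.
      * right. exists m, g. do 2 (split; [reflexivity|]). now apply IHm.
    + intros [[g [-> Hg]]|[m' [g [E [-> Hg]]]]].
      * left. exists g. split; [reflexivity|]. now apply IHs.
      * injection E as <-. right. exists g. split; [reflexivity|]. now apply IHm.
Qed.

Lemma NoDup_forests d s m : 1 <= d -> NoDup (forests d s m).
Proof.
  intros Hd. revert s. induction m as [|m IHm]; induction s as [|s IHs];
    rewrite ?forests_0, ?forests_S_0, ?forests_S_S.
  - repeat constructor. intros [].
  - apply Injective_map_NoDup; [|assumption].
    intros f g E. now injection E.
  - constructor.
  - apply NoDup_app.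
    + apply Injective_map_NoDup; [|assumption]. intros f g E. now injection E.
    + apply Injective_map_NoDup; [apply graft_inj|apply IHm].
    + intros f Hleaf Hgraft.
      apply in_map_iff in Hleaf as [g [<- _]].
      apply in_map_iff in Hgraft as [h [E Hh]].
      apply in_forests in Hh as [Hl _]; [|assumption].
      injection E as E _.
      assert (length (firstn d h) = d) by (rewrite length_firstn; lia).
      rewrite E in H. simpl in H. lia.
Qed.

Definition dtrees (d j : nat) : list tree := map (hd leaf) (forests d 1 j).

Lemma dforest_1 d j f :
  dforest d 1 j f <-> exists t, f = [t] /\ is_dtree d t = true /\ internal t = j.
Proof.
  split.
  - intros [Hl [HF Hm]]. destruct f as [|t [|]]; try discriminate.
    inversion HF; subst. exists t. split; [reflexivity|]. split; [assumption|]. simpl. lia.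
  - intros [t [-> [Ht Hj]]]. repeat split; simpl; auto. lia.
Qed.

Lemma in_dtrees d j t : 1 <= d ->
  In t (dtrees d j) <-> is_dtree d t = true /\ internal t = j.
Proof.
  intros Hd. unfold dtrees. rewrite in_map_iff. split.
  - intros [f [<- Hf]]. apply in_forests, dforest_1 in Hf as [t' [-> Ht]]; auto.
  - intros Ht. exists [t]. split; [reflexivity|].
    apply in_forests, dforest_1; eauto.
Qed.

Lemma NoDup_dtrees d j : 1 <= d -> NoDup (dtrees d j).
Proof.
  intros Hd. apply NoDup_map_NoDup_ForallPairs; [|now apply NoDup_forests].
  intros f g Hf Hg E.
  apply in_forests, dforest_1 in Hf as [t [-> _]]; [|assumption].
  apply in_forests, dforest_1 in Hg as [u [-> _]]; [|assumption].
  now simpl in E; subst.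
Qed.

Lemma dtrees_S d j : dtrees d (S j) = map (fun f => Node (firstn d f)) (forests d d j).
Proof. unfold dtrees. now rewrite forests_S_S, forests_0, map_app, !map_map. Qed.

Definition nforests (d s m : nat) : nat := length (forests d s m).

Lemma length_dtrees d j : length (dtrees d j) = nforests d 1 j.
Proof. apply length_map. Qed.

Lemma nforests_0 d s : nforests d s 0 = 1.
Proof.
  unfold nforests. induction s; [reflexivity|]. rewrite forests_S_0, length_map. exact IHs.
Qed.

Lemma nforests_S_S d s m : nforests d (S s) (S m) = nforests d s (S m) + nforests d (s + d) m.
Proof. unfold nforests. now rewrite forests_S_S, length_app, !length_map. Qed.

Lemma nforests_1_S d m : nforests d 1 (S m) = nforests d d m.
Proof. now rewrite nforests_S_S. Qed.

(* a(s,m) = s/(dm+s) binom(dm+s,m) for s := S s and d := S d', cleared of denominators. *)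
Lemma nforests_closed d' m s :
  nforests (S d') (S s) m * fact m * fact (d' * m + S s) = S s * fact (S d' * m + s).
Proof.
  revert s. induction m as [|m IHm]; intros s.
  - rewrite nforests_0, !Nat.mul_0_r, !Nat.add_0_l, fact_simpl. simpl. lia.
  - induction s as [|s IHs].
    + rewrite nforests_1_S. pose proof (IHm d') as H.
      replace (d' * S m + 1) with (d' * m + S d') by lia.
      replace (S d' * S m + 0) with (S (S d' * m + d')) by lia.
      rewrite (fact_simpl (S d' * m + d')), (fact_simpl m).
      transitivity (S m * (nforests (S d') (S d') m * fact m * fact (d' * m + S d')));
        [ring|].
      rewrite H. ring.
    + rewrite nforests_S_S.
      pose proof (IHm (s + S d')) as H2.
      replace (S s + S d') with (S (s + S d')) by lia.
      set (A1 := nforests (S d') (S s) (S m)) in *.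
      set (A2 := nforests (S d') (S (s + S d')) m) in *.
      replace (S d' * m + (s + S d')) with (S d' * S m + s) in H2 by lia.
      replace (d' * m + S (s + S d')) with (S (d' * S m + S s)) in H2 by lia.
      replace (d' * S m + S (S s)) with (S (d' * S m + S s)) by lia.
      replace (S d' * S m + S s) with (S (S d' * S m + s)) by lia.
      rewrite fact_simpl in H2 |- *. rewrite fact_simpl. rewrite (fact_simpl m) in IHs.
      set (X := fact (S d' * S m + s)) in *.
      set (Y := fact (d' * S m + S s)) in *.
      set (K := S (d' * S m + S s)).
      transitivity (K * (A1 * (S m * fact m) * Y) + S m * (A2 * fact m * (K * Y)));
        [unfold K; ring|].
      rewrite IHs. unfold K. rewrite H2, fact_simpl. fold X. ring.
Qed.

Lemma dforest_cons d s m t g :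
  dforest d (S s) m (t :: g) <->
  is_dtree d t = true /\ internal t <= m /\ dforest d s (m - internal t) g.
Proof.
  unfold dforest. simpl. rewrite Forall_cons_iff. intuition lia.
Qed.

Lemma NoDup_flat_map {A B} (f : A -> list B) (l : list A) : NoDup l ->
  (forall x, In x l -> NoDup (f x)) ->
  (forall x y z, In x l -> In y l -> In z (f x) -> In z (f y) -> x = y) ->
  NoDup (flat_map f l).
Proof.
  induction l as [|x l IH]; intros Hnd Hf Hdis; simpl; [constructor|].
  inversion Hnd; subst. apply NoDup_app.
  - apply Hf; now left.
  - apply IH; auto.
    + intros; apply Hf; now right.
    + intros u v z Hu Hv. apply Hdis; now right.
  - intros z Hz1 Hz2. apply in_flat_map in Hz2 as [y [Hy Hz2]].
    replace y with x in Hy by (apply (Hdis x y z); auto; [left|right]; auto).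
    contradiction.
Qed.

Definition nforests_with (d : nat) (q : tree -> bool) (s m : nat) : nat :=
  length (filter (forallb q) (forests d s m)).

Definition ndtrees_with (d : nat) (q : tree -> bool) (j : nat) : nat :=
  length (filter q (dtrees d j)).

Definition forests_by_first_tree (d : nat) (q : tree -> bool) (s m : nat) :=
  flat_map (fun j => flat_map (fun t => map (cons t) (filter (forallb q) (forests d s (m - j))))
                              (filter q (dtrees d j)))
           (seq 0 (S m)).

Lemma in_forests_by_first_tree d q s m f : 1 <= d ->
  In f (forests_by_first_tree d q s m) <-> In f (filter (forallb q) (forests d (S s) m)).
Proof.
  intros Hd. unfold forests_by_first_tree.
  rewrite filter_In, in_forests, in_flat_map by assumption. split.
  - intros [j [Hj Hf]]. apply in_seq in Hj.
    apply in_flat_map in Hf as [t [Ht Hf]]. apply in_map_iff in Hf as [g [<- Hg]].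
    apply filter_In in Ht as [Ht Hqt]. apply in_dtrees in Ht as [Ht <-]; [|assumption].
    apply filter_In in Hg as [Hg Hqg]. apply in_forests in Hg; [|assumption].
    split; [apply dforest_cons; split; [|split]; auto; lia|].
    simpl. now rewrite Hqt, Hqg.
  - intros [Hf Hq]. destruct f as [|t g]; [destruct Hf; discriminate|].
    apply dforest_cons in Hf as [Ht [Hj Hg]]. simpl in Hq. apply andb_true_iff in Hq as [Hqt Hqg].
    exists (internal t). split; [apply in_seq; lia|].
    apply in_flat_map. exists t. split.
    + apply filter_In. split; [now apply in_dtrees|assumption].
    + apply in_map, filter_In. split; [now apply in_forests|assumption].
Qed.

Lemma NoDup_forests_by_first_tree d q s m : 1 <= d -> NoDup (forests_by_first_tree d q s m).
Proof.
  intros Hd. unfold forests_by_first_tree. apply NoDup_flat_map.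
  - apply seq_NoDup.
  - intros j _. apply NoDup_flat_map.
    + now apply NoDup_filter, NoDup_dtrees.
    + intros t _. apply Injective_map_NoDup.
      * intros g h E. now injection E.
      * now apply NoDup_filter, NoDup_forests.
    + intros t u z _ _ Ht Hu.
      apply in_map_iff in Ht as [g [<- _]]. apply in_map_iff in Hu as [h [E _]].
      now injection E.
  - intros i j z _ _ Hi Hj.
    apply in_flat_map in Hi as [t [Ht Hi]]. apply in_flat_map in Hj as [u [Hu Hj]].
    apply in_map_iff in Hi as [g [<- _]]. apply in_map_iff in Hj as [h [E _]].
    injection E as -> _.
    apply filter_In in Ht as [Ht _]. apply in_dtrees in Ht as [_ <-]; [|assumption].
    apply filter_In in Hu as [Hu _]. now apply in_dtrees in Hu as [_ <-].
Qed.

Lemma nforests_with_S d q s m : 1 <= d ->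
  nforests_with d q (S s) m =
  list_sum (map (fun j => ndtrees_with d q j * nforests_with d q s (m - j)) (seq 0 (S m))).
Proof.
  intros Hd. unfold nforests_with.
  assert (Hperm : Permutation (forests_by_first_tree d q s m)
                              (filter (forallb q) (forests d (S s) m))).
  { apply NoDup_Permutation; [now apply NoDup_forests_by_first_tree| |].
    - now apply NoDup_filter, NoDup_forests.
    - intros f. now apply in_forests_by_first_tree. }
  rewrite <- (Permutation_length Hperm). unfold forests_by_first_tree.
  rewrite length_flat_map. f_equal. apply map_ext. intros j.
  rewrite (flat_map_constant_length (c := nforests_with d q s (m - j))); [reflexivity|].
  intros t _. apply length_map.
Qed.

Lemma nforests_with_true d s m : nforests_with d (fun _ => true) s m = nforests d s m.
Proof.
  unfold nforests_with, nforests. f_equal.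
  rewrite <- (filter_true (forests d s m)) at 2. apply filter_ext. intros f.
  now apply forallb_forall.
Qed.

Lemma ndtrees_with_true d j : ndtrees_with d (fun _ => true) j = nforests d 1 j.
Proof. unfold ndtrees_with. now rewrite filter_true, length_dtrees. Qed.

Lemma ndtrees_with_le d q j : ndtrees_with d q j <= nforests d 1 j.
Proof. unfold ndtrees_with. rewrite <- length_dtrees. apply filter_length_le. Qed.

Definition imperfect (p : nat) (t : tree) : bool := negb (is_perfect p t).

Lemma imperfect_children p cs :
  imperfect p (Node cs) = true -> forallb (imperfect p) cs = true.
Proof.
  unfold imperfect. cbn [is_perfect]. fold (is_perfect p).
  rewrite negb_orb, andb_true_iff. intros [_ H]. apply negb_true_iff in H.
  apply forallb_forall. intros t Ht. apply negb_true_iff.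
  destruct (is_perfect p t) eqn:E; [|reflexivity].
  rewrite <- H. symmetry. apply existsb_exists. eauto.
Qed.

Lemma filter_length_mono {A} (P Q : A -> bool) l :
  (forall x, In x l -> P x = true -> Q x = true) ->
  length (filter P l) <= length (filter Q l).
Proof.
  induction l as [|x l IH]; intros H; simpl; [constructor|].
  assert (IH' : length (filter P l) <= length (filter Q l))
    by (apply IH; intros; apply H; simpl; auto).
  destruct (P x) eqn:EP.
  - rewrite (H x (or_introl eq_refl) EP). simpl. lia.
  - destruct (Q x); simpl; lia.
Qed.

Lemma ndtrees_imperfect_S d p m : 1 <= d ->
  ndtrees_with d (imperfect p) (S m) <= nforests_with d (imperfect p) d m.
Proof.
  intros Hd. unfold ndtrees_with, nforests_with.
  rewrite dtrees_S, filter_map_swap, length_map.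
  apply filter_length_mono. intros f Hf H.
  apply in_forests in Hf as [Hl _]; [|assumption].
  rewrite firstn_all2 in H by lia. now apply imperfect_children.
Qed.

Definition branch (d i : nat) (c : tree) : list tree :=
  map (fun j => if j =? i then c else leaf) (seq 0 d).

Lemma length_branch d i c : length (branch d i c) = d.
Proof. unfold branch. now rewrite length_map, length_seq. Qed.

Lemma nth_branch d i c j : j < d ->
  nth j (branch d i c) leaf = if j =? i then c else leaf.
Proof.
  intros Hj. unfold branch. set (g := fun j => if j =? i then c else leaf).
  rewrite (nth_indep _ _ (g 0)) by now rewrite length_map, length_seq.
  now rewrite map_nth, seq_nth.
Qed.

Lemma internal_branch d i c : i < d ->
  list_sum (map internal (branch d i c)) = internal c.
Proof.
  intros Hi. enough (H : forall n, list_sum (map internal (branch n i c)) =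
                                   if i <? n then internal c else 0).
  { rewrite H. now apply Nat.ltb_lt in Hi as ->. }
  induction n as [|n IH]; [reflexivity|].
  unfold branch in *. rewrite seq_S, !map_app, list_sum_app, IH. simpl.
  destruct (Nat.ltb_spec i n), (Nat.ltb_spec i (S n)), (Nat.eqb_spec n i); simpl; lia.
Qed.

Lemma is_dtree_branch d i c : is_dtree d c = true ->
  Forall (fun t => is_dtree d t = true) (branch d i c).
Proof.
  intros Hc. apply Forall_forall. intros t Ht.
  apply in_map_iff in Ht as [j [<- _]]. now destruct (j =? i).
Qed.

Fixpoint spines (d n : nat) : list tree :=
  match n with
  | 0 => [Node (repeat leaf d)]
  | S n' => flat_map (fun i => map (fun c => Node (branch d i c)) (spines d n')) (seq 0 d)
  end.

Lemma length_spines d n : length (spines d n) = d ^ n.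
Proof.
  induction n as [|n IH]; [reflexivity|]. simpl.
  rewrite (flat_map_constant_length (c := d ^ n)), length_seq; [reflexivity|].
  intros i _. now rewrite length_map.
Qed.

Lemma perfect_from_S n cs : perfect_from (S n) (Node cs) =
  existsb (fun i =>
    forallb (fun j => (j =? i) || is_leaf (nth j cs leaf)) (seq 0 (length cs))
    && perfect_from n (nth i cs leaf)) (seq 0 (length cs)).
Proof. reflexivity. Qed.

Lemma in_spines d n t : 1 <= d -> In t (spines d n) ->
  is_dtree d t = true /\ internal t = S n /\ perfect_from (S n) t = true.
Proof.
  intros Hd. revert t. induction n as [|n IH]; intros t Ht.
  - destruct Ht as [<-|[]].
    repeat split.
    + apply is_dtree_Node. right. rewrite repeat_length. split; [reflexivity|].
      apply Forall_forall. intros u Hu. now rewrite (repeat_spec _ _ _ Hu).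
    + rewrite internal_Node by (destruct d; [lia|discriminate]).
      f_equal. clear Hd. induction d as [|d IHd]; [reflexivity|]. exact IHd.
    + rewrite perfect_from_S. apply existsb_exists. exists 0.
      rewrite repeat_length, in_seq, andb_true_r. split; [lia|].
      apply forallb_forall. intros j Hj. apply orb_true_iff. right.
      apply in_seq in Hj. now rewrite nth_repeat.
  - apply in_flat_map in Ht as [i [Hi Ht]]. apply in_seq in Hi.
    apply in_map_iff in Ht as [c [<- Hc]]. destruct (IH c Hc) as [Hcd [Hci Hcp]].
    repeat split.
    + apply is_dtree_Node. right. split; [apply length_branch|]. now apply is_dtree_branch.
    + rewrite internal_Node, internal_branch, Hci by (lia || (intros E;
        apply (f_equal (@length tree)) in E; rewrite length_branch in E; simpl in E; lia)).
      reflexivity.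
    + rewrite perfect_from_S, length_branch. apply existsb_exists. exists i.
      rewrite in_seq, nth_branch, Nat.eqb_refl, Hcp, andb_true_r by lia. split; [lia|].
      apply forallb_forall. intros j Hj. apply in_seq in Hj.
      rewrite nth_branch by lia. now destruct (j =? i).
Qed.

Lemma NoDup_spines d n : 1 <= d -> NoDup (spines d n).
Proof.
  intros Hd. induction n as [|n IH]; simpl; [repeat constructor; intros []|].
  apply NoDup_flat_map; [apply seq_NoDup| |].
  - intros i Hi. apply in_seq in Hi. apply Injective_map_NoDup; [|exact IH].
    intros c c' E. injection E as E.
    apply (f_equal (fun cs => nth i cs leaf)) in E.
    now rewrite !nth_branch, Nat.eqb_refl in E by lia.
  - intros i i' t Hi Hi' Ht Ht'. apply in_seq in Hi, Hi'.
    apply in_map_iff in Ht as [c [<- Hc]]. apply in_map_iff in Ht' as [c' [E _]].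
    injection E as E. apply (f_equal (fun cs => nth i cs leaf)) in E.
    rewrite !nth_branch, Nat.eqb_refl in E by lia.
    destruct (Nat.eqb_spec i i') as [|Hne]; [assumption|].
    apply in_spines in Hc as [_ [Hc _]]; [|assumption]. subst c. discriminate.
Qed.

Lemma ndtrees_imperfect_spines d p : 1 <= d -> 1 <= p ->
  ndtrees_with d (imperfect p) p + d ^ (p - 1) <= nforests d 1 p.
Proof.
  intros Hd Hp. unfold ndtrees_with, imperfect.
  rewrite <- ndtrees_with_true. unfold ndtrees_with. rewrite filter_true.
  rewrite <- (filter_length (is_perfect p) (dtrees d p)), <- length_spines.
  enough (length (spines d (p - 1)) <= length (filter (is_perfect p) (dtrees d p)))
    by lia.
  apply NoDup_incl_length; [now apply NoDup_spines|].
  intros t Ht. apply in_spines in Ht as [Htd [Hti Htp]]; [|assumption].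
  replace (S (p - 1)) with p in * by lia.
  apply filter_In. split; [now apply in_dtrees|].
  destruct t as [cs]. cbn [is_perfect]. now rewrite Htp.
Qed.

Lemma is_perfect_1 d t : is_dtree d t = true -> 1 <= internal t -> is_perfect 1 t = true.
Proof.
  induction t as [cs IH] using tree_nested_ind. intros Ht Hi.
  destruct cs as [|c cs']; [simpl in Hi; lia|].
  cbn [is_perfect]. fold (is_perfect 1). apply orb_true_iff.
  destruct (existsb (fun u => negb (is_leaf u)) (c :: cs')) eqn:E.
  - right. apply existsb_exists in E as [u [Hu Hu']]. apply existsb_exists.
    exists u. split; [assumption|]. rewrite Forall_forall in IH. apply IH; [assumption| |].
    + apply is_dtree_Node in Ht as [|[_ HF]]; [discriminate|].
      rewrite Forall_forall in HF. auto.
    + destruct u as [[|v vs]]; [discriminate|]. rewrite internal_Node by discriminate. lia.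
  - left. rewrite perfect_from_S. apply existsb_exists. exists 0.
    rewrite in_seq, andb_true_r. split; [simpl; lia|].
    apply forallb_forall. intros j Hj. apply orb_true_iff. right. apply in_seq in Hj.
    apply negb_false_iff, (existsb_nth (fun u => negb (is_leaf u))); [simpl in *; lia|exact E].
Qed.

Lemma ndtrees_imperfect_1 d k : 1 <= d -> 1 <= k -> ndtrees_with d (imperfect 1) k = 0.
Proof.
  intros Hd Hk. apply Nat.le_0_r. unfold ndtrees_with.
  rewrite <- (length_nil tree) at 2. rewrite <- (filter_false (dtrees d k)).
  apply filter_length_mono. intros t Ht. apply in_dtrees in Ht as [Ht Hi]; [|assumption].
  unfold imperfect. rewrite (is_perfect_1 d t Ht ltac:(lia)). discriminate.
Qed.

Lemma fact_ratio_le P Q e f :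
  (forall i, (P + i + 1) * e <= f * (Q + i + 1)) ->
  forall j, fact (P + j) * fact Q * e ^ j <= f ^ j * fact P * fact (Q + j).
Proof.
  intros H j. induction j as [|j IH]; [rewrite !Nat.add_0_r; simpl; lia|].
  rewrite !Nat.add_succ_r, !fact_simpl, !Nat.pow_succ_r'.
  specialize (H j).
  replace (S (P + j) * fact (P + j) * fact Q * (e * e ^ j))
    with ((S (P + j) * e) * (fact (P + j) * fact Q * e ^ j)) by ring.
  replace (f * f ^ j * fact P * (S (Q + j) * fact (Q + j)))
    with ((f * S (Q + j)) * (f ^ j * fact P * fact (Q + j))) by ring.
  apply Nat.mul_le_mono; [lia|exact IH].
Qed.

Section ForestRatios.

Variable d' : nat.
Hypothesis Hd' : 1 <= d'.
Local Notation d := (S d').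

Lemma nforests_shift_le n : d' ^ 2 * nforests d d n <= d ^ 2 * nforests d d' n.
Proof.
  destruct d' as [|d'']; [lia|].
  pose proof (nforests_closed (S d'') n (S d'')) as Hd.
  pose proof (nforests_closed (S d'') n d'') as Hd1.
  replace (S d'' * n + S (S d'')) with (S (S d'' * n + S d'')) in Hd by lia.
  replace (S (S d'') * n + S d'') with (S (S (S d'') * n + d'')) in Hd by lia.
  rewrite !fact_simpl in Hd.
  set (X := fact (S d'' * n + S d'')) in *. set (Y := fact (S (S d'') * n + d'')) in *.
  set (c := S (S d'' * n + S d'')) in *. set (w := S (S (S d'') * n + d'')) in *.
  assert (Hpos : 0 < fact n * X * c) by (pose proof (lt_O_fact n);
    pose proof (lt_O_fact (S d'' * n + S d'')); unfold c; nia).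
  assert (Hwc : S d'' * w <= S (S d'') * c) by (unfold w, c; nia).
  clearbody X Y c w.
  apply (Nat.mul_le_mono_pos_r _ _ _ Hpos).
  transitivity (S (S d'') * (S d'' * w) * (nforests (S (S d'')) (S d'') n * fact n * X)).
  - apply Nat.eq_le_incl.
    transitivity (S d'' ^ 2 * (nforests (S (S d'')) (S (S d'')) n * fact n * (c * X)));
      [ring|]. rewrite Hd, Hd1, Nat.pow_2_r. ring.
  - transitivity (S (S d'') * (S (S d'') * c) * (nforests (S (S d'')) (S d'') n * fact n * X));
      [apply Nat.mul_le_mono_r, Nat.mul_le_mono_l; assumption|].
    apply Nat.eq_le_incl. rewrite Nat.pow_2_r. ring.
Qed.

Lemma nforests_step_le n : d' ^ d' * nforests d d' (S n) <= d ^ d * nforests d d' n.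
Proof.
  destruct d' as [|e]; [lia|].
  pose proof (nforests_closed (S e) (S n) e) as H1.
  pose proof (nforests_closed (S e) n e) as H0.
  set (V := S e * n + S e) in *. set (W := S (S e) * n + e) in *.
  replace (S e * S n + S e) with (V + S e) in H1 by (unfold V; lia).
  replace (S (S e) * S n + e) with (S W + S e) in H1 by (unfold W; lia).
  assert (FR := fact_ratio_le (S W) V (S e) (S (S e))
    ltac:(intros i; unfold V, W; nia) (S e)).
  assert (HW : S W <= S (S e) * S n) by (unfold W; lia).
  rewrite (fact_simpl n) in H1. rewrite (fact_simpl W) in FR.
  assert (Hpos : 0 < S n * fact n * fact V * fact (V + S e))
    by (pose proof (lt_O_fact n); pose proof (lt_O_fact V); pose proof (lt_O_fact (V + S e)); nia).
  set (A1 := nforests (S (S e)) (S e) (S n)) in *.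
  set (A0 := nforests (S (S e)) (S e) n) in *.
  rewrite (Nat.pow_succ_r' (S (S e)) (S e)).
  set (E := S e ^ S e) in *. set (F := S (S e) ^ S e) in *.
  clearbody V W A1 A0 E F.
  apply (Nat.mul_le_mono_pos_r _ _ _ Hpos).
  transitivity (S e * (fact (S W + S e) * fact V * E)).
  { apply Nat.eq_le_incl.
    transitivity (E * fact V * (A1 * (S n * fact n) * fact (V + S e))); [ring|].
    rewrite H1. ring. }
  transitivity (S e * (F * (S W * fact W) * fact (V + S e)));
    [now apply Nat.mul_le_mono_l|].
  transitivity (F * fact (V + S e) * S W * (A0 * fact n * fact V)).
  { apply Nat.eq_le_incl. rewrite H0. ring. }
  transitivity (F * fact (V + S e) * (S (S e) * S n) * (A0 * fact n * fact V));
    [apply Nat.mul_le_mono_r, Nat.mul_le_mono_l; assumption|].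
  apply Nat.eq_le_incl. ring.
Qed.

Lemma nforests_steps_le n j :
  d' ^ (j * d') * nforests d d' (n + j) <= d ^ (j * d) * nforests d d' n.
Proof.
  induction j as [|j IH]; [rewrite Nat.add_0_r; simpl; lia|].
  rewrite Nat.add_succ_r, !Nat.mul_succ_l, !Nat.pow_add_r.
  pose proof (nforests_step_le (n + j)).
  transitivity (d' ^ (j * d') * (d ^ d * nforests d d' (n + j))); [nia|].
  transitivity (d ^ d * (d ^ (j * d) * nforests d d' n)); [nia|].
  apply Nat.eq_le_incl. ring.
Qed.

Lemma nforests_ratio_le p m : p <= m ->
  d' ^ (2 + p * d') * nforests d d m <= d ^ (2 + p * d) * nforests d d' (m - p).
Proof.
  intros Hpm. rewrite !Nat.pow_add_r.
  pose proof (nforests_shift_le m) as Hshift.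
  pose proof (nforests_steps_le (m - p) p) as Hsteps.
  replace (m - p + p) with m in Hsteps by lia.
  transitivity (d' ^ (p * d') * (d ^ 2 * nforests d d' m)); [nia|].
  transitivity (d ^ 2 * (d ^ (p * d) * nforests d d' (m - p))); [nia|].
  apply Nat.eq_le_incl. ring.
Qed.

End ForestRatios.

Lemma mul_sq_le_mul_pow d' p : 1 <= d' -> 2 <= p -> ~ (d' = 1 /\ p = 2) ->
  (p * d' + 1) * S d' ^ 2 <= 2 * p * d' ^ 2 * S d' ^ (p - 1).
Proof.
  intros Hd' Hp Hex.
  destruct (Nat.eq_dec d' 1) as [->|Hne].
  - assert (4 <= 2 ^ (p - 1)) by (change 4 with (2 ^ 2); apply Nat.pow_le_mono_r; lia).
    simpl. nia.
  - assert (S d' <= S d' ^ (p - 1))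
      by (rewrite <- (Nat.pow_1_r (S d')) at 1; apply Nat.pow_le_mono_r; lia).
    simpl. nia.
Qed.

Open Scope R_scope.

Fixpoint conv_pow (x : nat -> R) (s m : nat) : R :=
  match s with
  | 0 => if (m =? 0)%nat then 1 else 0
  | S s' => sum_f_R0 (fun j => x j * conv_pow x s' (m - j)) m
  end.

Lemma INR_list_sum_seq (g : nat -> nat) m :
  INR (list_sum (map g (seq 0 (S m)))) = sum_f_R0 (fun j => INR (g j)) m.
Proof.
  induction m as [|m IH]; [simpl; now rewrite Nat.add_0_r|].
  rewrite seq_S, map_app, list_sum_app, plus_INR, IH. simpl. now rewrite Nat.add_0_r.
Qed.

Lemma conv_pow_nonneg x s m : (forall j, 0 <= x j) -> 0 <= conv_pow x s m.
Proof.
  intros Hx. revert m. induction s as [|s IH]; intros m; simpl.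
  - destruct (m =? 0)%nat; lra.
  - apply cond_pos_sum. intros j. now apply Rmult_le_pos.
Qed.

Lemma conv_pow_le x y s m : (forall j, 0 <= x j) -> (forall j, x j <= y j) ->
  conv_pow x s m <= conv_pow y s m.
Proof.
  intros Hx Hxy. revert m. induction s as [|s IH]; intros m; simpl; [lra|].
  apply sum_Rle. intros j _. apply Rmult_le_compat; auto using conv_pow_nonneg.
Qed.

Lemma conv_pow_geometric x r mu s m :
  conv_pow (fun j => x j * r ^ j * mu) s m = conv_pow x s m * r ^ m * mu ^ s.
Proof.
  revert m. induction s as [|s IH]; intros m; simpl.
  - destruct (Nat.eqb_spec m 0); subst; simpl; ring.
  - transitivity (sum_f_R0 (fun j => x j * conv_pow x s (m - j) * (r ^ m * (mu * mu ^ s))) m).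
    + apply sum_eq. intros j Hj. rewrite IH.
      replace (r ^ m) with (r ^ j * r ^ (m - j)) by (rewrite <- pow_add; f_equal; lia).
      ring.
    + rewrite <- scal_sum. ring.
Qed.

Lemma conv_pow_nforests d s m : (1 <= d)%nat ->
  conv_pow (fun j => INR (nforests d 1 j)) s m = INR (nforests d s m).
Proof.
  intros Hd. revert m. induction s as [|s IH]; intros m.
  - destruct m; simpl conv_pow; [now rewrite nforests_0|reflexivity].
  - rewrite <- nforests_with_true, nforests_with_S, INR_list_sum_seq by assumption.
    apply sum_eq. intros j _. now rewrite mult_INR, ndtrees_with_true, nforests_with_true, IH.
Qed.

Lemma nforests_with_le_conv_pow d q x s m : (1 <= d)%nat -> (forall j, 0 <= x j) ->
  (forall j, (j <= m)%nat -> INR (ndtrees_with d q j) <= x j) ->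
  INR (nforests_with d q s m) <= conv_pow x s m.
Proof.
  intros Hd Hx Hq. enough (H : forall m', (m' <= m)%nat ->
    INR (nforests_with d q s m') <= conv_pow x s m') by now apply H.
  induction s as [|s IH]; intros m' Hm'.
  - unfold nforests_with. destruct m'; simpl; lra.
  - rewrite nforests_with_S, INR_list_sum_seq by assumption.
    apply sum_Rle. intros j Hj. rewrite mult_INR.
    apply Rmult_le_compat; try apply pos_INR; [apply Hq|apply IH]; lia.
Qed.

Lemma exp_INR_mul n x : exp (INR n * x) = exp x ^ n.
Proof.
  induction n as [|n IH]; [simpl; now rewrite Rmult_0_l, exp_0|].
  rewrite S_INR, Rmult_plus_distr_r, Rmult_1_l, exp_plus, IH. simpl. ring.
Qed.

Lemma succ_div_pow_le_exp1 n : (1 <= n)%nat -> (INR (S n) / INR n) ^ n <= exp 1.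
Proof.
  intros Hn. assert (0 < INR n) by (apply lt_0_INR; lia).
  replace (exp 1) with (exp (/ INR n) ^ n) by (rewrite <- exp_INR_mul; f_equal; field; lra).
  apply pow_incr. rewrite S_INR. split.
  - left. apply Rdiv_lt_0_compat; lra.
  - replace ((INR n + 1) / INR n) with (1 + / INR n) by (field; lra). apply exp_ineq1_le.
Qed.

Lemma exp1_sqr_ge_6 : 6 <= exp 1 ^ 2.
Proof.
  assert (H : (1 + / 8) ^ 8 <= exp 1).
  { replace (exp 1) with (exp (/ 8) ^ 8) by (rewrite <- exp_INR_mul; f_equal; simpl; field).
    apply pow_incr. split; [lra|apply exp_ineq1_le]. }
  simpl in H. nra.
Qed.

Lemma kappa_pos p d : (1 <= p)%nat -> (1 <= d)%nat -> 0 < kappa p d.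
Proof.
  intros Hp Hd. unfold kappa. apply Rinv_0_lt_compat.
  assert (0 < INR p) by (apply lt_0_INR; lia). assert (0 < INR d) by (apply lt_0_INR; lia).
  pose proof (exp_pos 1). repeat apply Rmult_lt_0_compat; try apply pow_lt; lra.
Qed.

Lemma shift_steps_ratio_le d' p : (1 <= d')%nat -> (2 <= p)%nat ->
  INR (p * d' + 1) * (INR (S d') / INR d') ^ 2 * ((INR (S d') / INR d') ^ d') ^ p
  <= 2 * INR p * exp 1 ^ p * INR (S d') ^ (p - 1).
Proof.
  intros Hd' Hp.
  set (x := INR (S d')). set (y := INR d'). set (e := exp 1). set (q := (x / y) ^ d').
  assert (Hy : 0 < y) by (apply lt_0_INR; lia).
  assert (Hx : 0 < x) by (apply lt_0_INR; lia).
  assert (He : 0 < e) by apply exp_pos.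
  assert (Hxy : 0 <= x / y) by (left; now apply Rdiv_lt_0_compat).
  assert (Hex : (d' = 1 /\ p = 2)%nat \/ ~ (d' = 1 /\ p = 2)%nat) by lia.
  destruct Hex as [[-> ->]|Hex].
  (* Here [q = 2] and the bound [q <= e] used below is too weak; [e^2 >= 6] suffices. *)
  { unfold q, x, y, e. pose proof exp1_sqr_ge_6. simpl in *. lra. }
  pose proof (le_INR _ _ (mul_sq_le_mul_pow d' p Hd' Hp Hex)) as Hnat.
  rewrite !mult_INR, !pow_INR in Hnat. fold x y in Hnat. simpl (INR 2) in Hnat.
  assert (Hqe : q ^ p <= e ^ p)
    by (apply pow_incr; split; [now apply pow_le|now apply succ_div_pow_le_exp1]).
  assert (Hsq : INR (p * d' + 1) * (x / y) ^ 2 <= 2 * INR p * x ^ (p - 1)).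
  { apply (Rmult_le_reg_r (y ^ 2)); [apply pow_lt; lra|].
    replace (INR (p * d' + 1) * (x / y) ^ 2 * y ^ 2) with (INR (p * d' + 1) * x ^ 2)
      by (field; lra).
    lra. }
  apply (Rle_trans _ (INR (p * d' + 1) * (x / y) ^ 2 * e ^ p)).
  - apply Rmult_le_compat_l; [|assumption].
    apply Rmult_le_pos; [apply pos_INR|now apply pow_le].
  - replace (2 * INR p * e ^ p * x ^ (p - 1)) with (2 * INR p * x ^ (p - 1) * e ^ p) by ring.
    apply Rmult_le_compat_r; [apply pow_le; lra|assumption].
Qed.

Lemma kappa_ratio_le d' p : (1 <= d')%nat -> (2 <= p)%nat ->
  kappa p (S d') * INR (p * d' + 1) *
    (INR (S d') ^ (2 + p * S d') / INR d' ^ (2 + p * d')) <= INR (S d' ^ (p - 1)).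
Proof.
  intros Hd' Hp. pose proof (shift_steps_ratio_le d' p Hd' Hp) as Hkey.
  set (x := INR (S d')) in *. set (y := INR d') in *. set (e := exp 1) in *.
  assert (Hy : 0 < y) by (apply lt_0_INR; lia).
  assert (Hx : 0 < x) by (apply lt_0_INR; lia).
  assert (He : 0 < e) by apply exp_pos.
  assert (HP : 0 < INR p) by (apply lt_0_INR; lia).
  unfold kappa. fold x e. rewrite pow_INR. fold x.
  apply (Rmult_le_reg_r (2 * INR p * x ^ p * e ^ p)).
  { repeat apply Rmult_lt_0_compat; try apply pow_lt; lra. }
  replace (x ^ (p - 1) * (2 * INR p * x ^ p * e ^ p))
    with (2 * INR p * e ^ p * x ^ (p - 1) * x ^ p) by ring.
  eapply Rle_trans; [|apply Rmult_le_compat_r; [apply pow_le; lra|exact Hkey]].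
  right. rewrite Nat.mul_succ_r, !pow_add, (Nat.mul_comm p d'), !pow_mult.
  unfold Rdiv. rewrite !Rpow_mult_distr, !pow_inv.
  field. repeat split; repeat apply pow_nonzero; lra.
Qed.

Lemma sum_f_R0_eqb k y n : (k <= n)%nat ->
  sum_f_R0 (fun j => if (j =? k)%nat then y else 0) n = y.
Proof.
  intros Hk. induction n as [|n IH].
  - replace k with 0%nat by lia. reflexivity.
  - rewrite tech5. destruct (Nat.eq_dec k (S n)) as [->|Hne].
    + rewrite Nat.eqb_refl, sum_eq_R0; [ring|].
      intros j Hj. destruct (Nat.eqb_spec j (S n)); [lia|reflexivity].
    + rewrite IH by lia. destruct (Nat.eqb_spec (S n) k); [lia|ring].
Qed.

Section ImperfectTrees.

Variables d' p : nat.
Hypothesis Hd' : (1 <= d')%nat.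
Hypothesis Hp : (2 <= p)%nat.
Local Notation d := (S d').
Local Notation rho := (exp (- kappa p d)).

Definition tilted (j : nat) : R := INR (nforests d 1 j) * rho ^ j / rho ^ p.

Definition imperfect_bound (j : nat) : R :=
  tilted j - (if (j =? p)%nat then INR (d ^ (p - 1)) else 0).

Lemma rho_pow_le j k : (j <= k)%nat -> rho ^ k <= rho ^ j.
Proof.
  intros Hjk. pose proof (exp_pos (- kappa p d)).
  assert (rho <= 1).
  { rewrite <- exp_0. left. apply exp_increasing.
    pose proof (kappa_pos p d ltac:(lia) ltac:(lia)). lra. }
  replace k with (j + (k - j))%nat by lia. rewrite pow_add.
  rewrite <- (Rmult_1_r (rho ^ j)) at 2. apply Rmult_le_compat_l; [apply pow_le; lra|].
  rewrite <- (pow1 (k - j)). apply pow_incr. lra.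
Qed.

Lemma tilted_nonneg j : 0 <= tilted j.
Proof.
  unfold tilted. pose proof (exp_pos (- kappa p d)).
  apply Rmult_le_pos; [apply Rmult_le_pos; [apply pos_INR|apply pow_le; lra]|].
  left. now apply Rinv_0_lt_compat, pow_lt.
Qed.

Lemma nforests_le_tilted j : (j <= p)%nat -> INR (nforests d 1 j) <= tilted j.
Proof.
  intros Hj. unfold tilted. pose proof (exp_pos (- kappa p d)).
  assert (0 < rho ^ p) by now apply pow_lt.
  apply (Rmult_le_reg_r (rho ^ p)); [assumption|].
  replace (INR (nforests d 1 j) * rho ^ j / rho ^ p * rho ^ p)
    with (INR (nforests d 1 j) * rho ^ j) by (field; lra).
  apply Rmult_le_compat_l; [apply pos_INR|now apply rho_pow_le].
Qed.

Lemma tilted_p : tilted p = INR (nforests d 1 p).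
Proof. unfold tilted. field. apply pow_nonzero. pose proof (exp_pos (- kappa p d)). lra. Qed.

Lemma imperfect_bound_nonneg j : 0 <= imperfect_bound j.
Proof.
  unfold imperfect_bound. destruct (Nat.eqb_spec j p) as [->|_].
  - pose proof (ndtrees_imperfect_spines d p ltac:(lia) ltac:(lia)).
    rewrite tilted_p, <- minus_INR by lia. apply pos_INR.
  - pose proof (tilted_nonneg j). lra.
Qed.

Lemma imperfect_bound_le_tilted j : imperfect_bound j <= tilted j.
Proof.
  unfold imperfect_bound. destruct (j =? p)%nat; [|lra].
  pose proof (pos_INR (d ^ (p - 1))). lra.
Qed.

Lemma conv_pow_tilted s n :
  conv_pow tilted s n = INR (nforests d s n) * rho ^ n * (/ rho ^ p) ^ s.
Proof.
  unfold tilted. unfold Rdiv.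
  rewrite (conv_pow_geometric (fun j => INR (nforests d 1 j))), conv_pow_nforests by lia.
  reflexivity.
Qed.

Lemma spine_deficit_le m : (p <= m)%nat ->
  INR (nforests d d m) - INR (d ^ (p - 1)) * INR (nforests d d' (m - p))
  <= rho ^ (p * d' + 1) * INR (nforests d d m).
Proof.
  intros Hpm.
  set (A := INR (nforests d d m)). set (D := INR (nforests d d' (m - p))).
  set (M := INR (p * d' + 1)).
  set (G := INR d ^ (2 + p * d) / INR d' ^ (2 + p * d')).
  assert (Hk : 0 < kappa p d) by (apply kappa_pos; lia).
  assert (HA : 0 <= A) by apply pos_INR. assert (HD : 0 <= D) by apply pos_INR.
  assert (HM : 0 <= M) by apply pos_INR.
  assert (Hexp : 1 - rho ^ (p * d' + 1) <= kappa p d * M).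
  { rewrite <- exp_INR_mul. fold M. pose proof (exp_ineq1_le (M * - kappa p d)). lra. }
  assert (Hratio : A <= G * D).
  { assert (Hy : 0 < INR d' ^ (2 + p * d')) by (apply pow_lt, lt_0_INR; lia).
    apply (Rmult_le_reg_l (INR d' ^ (2 + p * d'))); [assumption|].
    unfold G. replace (INR d' ^ (2 + p * d') * (INR d ^ (2 + p * d) / INR d' ^ (2 + p * d') * D))
      with (INR d ^ (2 + p * d) * D) by (field; lra).
    unfold A, D. rewrite <- !pow_INR, <- !mult_INR. apply le_INR.
    now apply nforests_ratio_le. }
  assert (Hnum : kappa p d * M * G <= INR (d ^ (p - 1))) by now apply kappa_ratio_le.
  assert (HkM : 0 <= kappa p d * M) by nra.
  assert ((1 - rho ^ (p * d' + 1)) * A <= kappa p d * M * A) by now apply Rmult_le_compat_r.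
  assert (kappa p d * M * A <= kappa p d * M * G * D)
    by (rewrite (Rmult_assoc (kappa p d * M) G D); now apply Rmult_le_compat_l).
  assert (kappa p d * M * G * D <= INR (d ^ (p - 1)) * D) by now apply Rmult_le_compat_r.
  lra.
Qed.

Lemma conv_pow_imperfect_bound_le m : (p <= m)%nat ->
  conv_pow imperfect_bound d m <= tilted (S m).
Proof.
  intros Hpm.
  set (X := fun j => conv_pow tilted d' (m - j)).
  set (c := INR (d ^ (p - 1))).
  assert (Hdom : conv_pow imperfect_bound d m <= sum_f_R0 (fun j => imperfect_bound j * X j) m).
  { apply sum_Rle. intros j _. apply Rmult_le_compat_l; [apply imperfect_bound_nonneg|].
    apply conv_pow_le; [apply imperfect_bound_nonneg|apply imperfect_bound_le_tilted]. }
  assert (Hsplit : sum_f_R0 (fun j => imperfect_bound j * X j) m =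
                   conv_pow tilted d m - c * X p).
  { change (conv_pow tilted d m) with (sum_f_R0 (fun j => tilted j * X j) m).
    rewrite <- (sum_f_R0_eqb p (c * X p) m Hpm), <- minus_sum. apply sum_eq. intros j _.
    unfold imperfect_bound. destruct (Nat.eqb_spec j p) as [->|]; fold c; ring. }
  rewrite Hsplit in Hdom. unfold X in Hdom. rewrite !conv_pow_tilted in Hdom.
  eapply Rle_trans; [exact Hdom|]. clear Hdom Hsplit.
  pose proof (spine_deficit_le m Hpm) as Hdef. fold c in Hdef.
  unfold tilted. rewrite nforests_1_S.
  set (A := INR (nforests d d m)) in *. set (D := INR (nforests d d' (m - p))) in *.
  set (r := rho) in *. assert (Hr : 0 < r) by apply exp_pos.
  assert (Em : r ^ m = r ^ (m - p) * r ^ p) by (rewrite <- pow_add; f_equal; lia).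
  assert (ESm : r ^ S m = r ^ (m - p) * r ^ p * r)
    by (simpl pow; rewrite Em; ring).
  assert (Edef : r ^ (p * d' + 1) = (r ^ p) ^ d' * r)
    by (rewrite pow_add, pow_mult; ring).
  rewrite Edef in Hdef. rewrite Em, ESm. simpl pow.
  set (w := r ^ (m - p) * (/ r ^ p) ^ d').
  assert (Hw : 0 < w)
    by (apply Rmult_lt_0_compat; apply pow_lt; [|apply Rinv_0_lt_compat, pow_lt]; lra).
  transitivity (w * (A - c * D)).
  { right. unfold w. field. apply pow_nonzero. lra. }
  transitivity (w * ((r ^ p) ^ d' * r * A)); [apply Rmult_le_compat_l; [lra|exact Hdef]|].
  right. unfold w. rewrite pow_inv. field. split; apply pow_nonzero; [|apply pow_nonzero]; lra.
Qed.

Lemma ndtrees_imperfect_le_bound j :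
  INR (ndtrees_with d (imperfect p) j) <= imperfect_bound j.
Proof.
  induction j as [j IH] using lt_wf_ind. unfold imperfect_bound.
  destruct (lt_eq_lt_dec j p) as [[Hlt| ->]|Hgt].
  - destruct (Nat.eqb_spec j p) as [|_]; [lia|]. rewrite Rminus_0_r.
    eapply Rle_trans; [apply le_INR, ndtrees_with_le|].
    now apply nforests_le_tilted, Nat.lt_le_incl.
  - pose proof (ndtrees_imperfect_spines d p ltac:(lia) ltac:(lia)).
    rewrite Nat.eqb_refl, tilted_p, <- minus_INR by lia. apply le_INR. lia.
  - destruct j as [|m]; [lia|]. destruct (Nat.eqb_spec (S m) p) as [|_]; [lia|].
    rewrite Rminus_0_r.
    apply (Rle_trans _ (INR (nforests_with d (imperfect p) d m))).
    { apply le_INR, ndtrees_imperfect_S. lia. }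
    apply (Rle_trans _ (conv_pow imperfect_bound d m)); [|apply conv_pow_imperfect_bound_le; lia].
    apply nforests_with_le_conv_pow; [lia|apply imperfect_bound_nonneg|].
    intros j Hj. apply IH. lia.
Qed.

End ImperfectTrees.

Lemma ndtrees_imperfect_le d p k : (2 <= d)%nat -> (1 <= p)%nat ->
  INR (ndtrees_with d (imperfect p) k) <= INR (nforests d 1 k) * exp (- kappa p d * INR (k - p)).
Proof.
  intros Hd Hp. destruct (le_lt_dec k p) as [Hkp|Hpk].
  - replace (k - p)%nat with 0%nat by lia. rewrite Rmult_0_r, exp_0, Rmult_1_r.
    apply le_INR, ndtrees_with_le.
  - assert (Hpos : 0 <= INR (nforests d 1 k) * exp (- kappa p d * INR (k - p)))
      by (apply Rmult_le_pos; [apply pos_INR|left; apply exp_pos]).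
    destruct (Nat.eq_dec p 1) as [->|Hp1].
    { rewrite ndtrees_imperfect_1 by lia. exact Hpos. }
    destruct d as [|d']; [lia|].
    pose proof (ndtrees_imperfect_le_bound d' p ltac:(lia) ltac:(lia) k) as Hbound.
    unfold imperfect_bound, tilted in Hbound.
    destruct (Nat.eqb_spec k p); [lia|]. rewrite Rminus_0_r in Hbound.
    set (rho := exp (- kappa p (S d'))) in Hbound.
    assert (Hrho : 0 < rho) by apply exp_pos.
    replace (exp (- kappa p (S d') * INR (k - p))) with (rho ^ k / rho ^ p).
    + unfold Rdiv in *. now rewrite <- Rmult_assoc.
    + rewrite Rmult_comm, exp_INR_mul. fold rho. replace k with ((k - p) + p)%nat at 1 by lia.
      rewrite pow_add. field. apply pow_nonzero. lra.
Qed.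

Theorem theorem1p7 (d p k : nat) (s : list tree) :
  (2 <= d)%nat -> (1 <= p)%nat ->
  NoDup s ->
  (forall t : tree, In t s <-> (is_dtree d t = true /\ internal t = k)) ->
  INR (length (filter (fun t => negb (is_perfect p t)) s)) / INR (length s)
    <= exp (- kappa p d * INR (k - p)).
Proof.
  intros Hd Hp Hs Hmem.
  assert (Hlen : length s = nforests d 1 k).
  { rewrite <- length_dtrees. apply Permutation_length, NoDup_Permutation;
      [assumption|now apply NoDup_dtrees; lia|].
    intros t. rewrite Hmem. symmetry. apply in_dtrees. lia. }
  assert (Hcount : (length (filter (imperfect p) s) <= ndtrees_with d (imperfect p) k)%nat).
  { apply NoDup_incl_length; [now apply NoDup_filter|].
    intros t. rewrite !filter_In, Hmem, <- in_dtrees by lia. tauto. }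
  fold (imperfect p). rewrite Hlen.
  destruct (Nat.eq_dec (nforests d 1 k) 0) as [->|Hne].
  { rewrite Rdiv_0_r. left. apply exp_pos. }
  assert (Hn : 0 < INR (nforests d 1 k)) by (apply lt_0_INR; lia).
  apply (Rmult_le_reg_r _ _ _ Hn). unfold Rdiv. rewrite Rmult_assoc, Rinv_l, Rmult_1_r by lra.
  rewrite Rmult_comm. eapply Rle_trans; [apply le_INR, Hcount|]. now apply ndtrees_imperfect_le.
Qed.
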